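(* Let $A_{dsc}$ be the algorithm for the Demand \& Set-Cover (DSC) problem that runs an $f_{sc}$-factor approximation algorithm $A_{sc}$ for Set-Cover and an $f_{kp}$-factor approximation algorithm $A_{kp}$ for Minimization Knapsack, and returns the union $\mathcal{L}_{sc}\cup\mathcal{L}_{kp}$ of their solutions. Then $A_{dsc}$ returns a feasible solution for DSC whose cost is at most $(f_{sc}+f_{kp})$ times the optimal cost of DSC.
   Context: Let $\mathcal{L}$ be a finite set of candidate sites and $\mathcal{I}$ a set of locations of interest. Each site $i\in\mathcal{L}$ has a cost $c_i\ge 0$, a demand $d_i\ge 0$, and a cover set $S_i^r\subseteq\mathcal{I}$ (locations within reachability radius $r$ of $i$); $D\ge 0$ is a required total demand. The Demand \& Set-Cover (DSC) problem is: minimize $\sum_{i\in\mathcal{L}} c_i x_i$ over $x_i\in\{0,1\}$ subject to $\sum_{i\in\mathcal{L}:\ell\in S_i^r} x_i\ge 1$ for all $\ell\in\mathcal{I}$ and $\sum_{i\in\mathcal{L}} d_i x_i\ge D$. Its two subproblems are Set-Cover (SC): minimize $\sum_i c_i x_i$ subject only to the covering constraints $\sum_{i:\ell\in S_i^r} x_i\ge 1$ for all $\ell\in\mathcal{I}$; and Minimization Knapsack (MinKP): minimize $\sum_i c_i x_i$ subject only to $\sum_i d_i x_i\ge D$. $A_{sc}$ is an $f_{sc}$-factor approximation algorithm for SC returning $\mathcal{L}_{sc}\subseteq\mathcal{L}$, and $A_{kp}$ is an $f_{kp}$-factor approximation algorithm for MinKP returning $\mathcal{L}_{kp}\subseteq\mathcal{L}$.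 The cost of a set of sites is the sum of their costs $c_i$. *)

From HB Require Import structures.
From mathcomp Require Import all_boot all_order all_algebra.
Set Implicit Arguments. Unset Strict Implicit. Unset Printing Implicit Defensive.
Import Order.TTheory GRing.Theory Num.Theory.
Local Open Scope ring_scope.

Section DSC.
Variables (R : realFieldType) (L I : finType).

(* A solution is a set of chosen sites X (x_i = 1 iff i \in X). *)
Definition cost (c : L -> R) (X : {set L}) : R := \sum_(i in X) c i.

Definition sc_feasible (S : L -> {set I}) (X : {set L}) : Prop :=
  forall l : I, (1 <= \sum_(i in X | l \in S i) 1)%N.

Definition kp_feasible (d : L -> R) (D : R) (X : {set L}) : Prop :=
  D <= \sum_(i in X) d i.

Definition dsc_feasible (d : L -> R) (D : R) (S : L -> {set I}) (X : {set L}) :=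
  sc_feasible S X /\ kp_feasible d D X.

(* A_sc is an f-factor approximation algorithm for Set-Cover: on every
   feasible instance (nonnegative costs) it returns a feasible solution of
   cost at most f times the cost of any feasible solution (i.e. f * OPT). *)
Definition sc_approx (f : R) (A : (L -> R) -> (L -> {set I}) -> {set L}) :=
  forall (c : L -> R) (S : L -> {set I}),
    (forall i, 0 <= c i) -> (exists X, sc_feasible S X) ->
    sc_feasible S (A c S) /\
    forall X, sc_feasible S X -> cost c (A c S) <= f * cost c X.

Definition kp_approx (f : R) (A : (L -> R) -> (L -> R) -> R -> {set L}) :=
  forall (c d : L -> R) (D : R),
    (forall i, 0 <= c i) -> (forall i, 0 <= d i) -> 0 <= D ->
    (exists X, kp_feasible d D X) ->
    kp_feasible d D (A c d D) /\
    forall X, kp_feasible d D X -> cost c (A c d D) <= f * cost c X.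

Definition A_dsc (Asc : (L -> R) -> (L -> {set I}) -> {set L})
  (Akp : (L -> R) -> (L -> R) -> R -> {set L})
  (c d : L -> R) (D : R) (S : L -> {set I}) : {set L} :=
  Asc c S :|: Akp c d D.

End DSC.

From HB Require Import structures.
From mathcomp Require Import all_boot all_order all_algebra.
Import Order.TTheory GRing.Theory Num.Theory.
Set Implicit Arguments. Unset Strict Implicit. Unset Printing Implicit Defensive.
Local Open Scope ring_scope.

(* Both subproblems have upward-closed feasible sets, so the union of the two
   returned solutions is feasible for DSC.  Any DSC-feasible X is feasible for
   each subproblem, so each returned solution costs at most its factor times
   cost X, and with nonnegative costs the union costs at most the sum. *)

Section NonnegSums.
Variables (R : realDomainType) (T : finType) (f : T -> R).
Hypothesis f_ge0 : forall i, 0 <= f i.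

Lemma sumr_subset_le (A B : {set T}) :
  A \subset B -> \sum_(i in A) f i <= \sum_(i in B) f i.
Proof.
move=> /setIidPr sAB.
rewrite [leRHS](big_setID A) /= sAB lerDl.
exact: sumr_ge0.
Qed.

Lemma sumr_setU_le (A B : {set T}) :
  \sum_(i in A :|: B) f i <= \sum_(i in A) f i + \sum_(i in B) f i.
Proof.
rewrite (big_setID A) /= setUK setDUl setDv set0U lerD2l.
exact/sumr_subset_le/subsetDl.
Qed.

End NonnegSums.

Section Feasibility.
Variables (R : realFieldType) (L I : finType).

Lemma sc_feasibleS (S : L -> {set I}) (X Y : {set L}) :
  X \subset Y -> sc_feasible S X -> sc_feasible S Y.
Proof.
move=> sXY feasX l; apply: leq_trans (feasX l) _.
rewrite !sum1dep_card; apply: subset_leq_card.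
by apply/subsetP => i; rewrite !inE => /andP[/(subsetP sXY) -> ->].
Qed.

Lemma kp_feasibleS (d : L -> R) (D : R) (X Y : {set L}) :
  (forall i, 0 <= d i) -> X \subset Y -> kp_feasible d D X -> kp_feasible d D Y.
Proof. by move=> d_ge0 sXY /le_trans; apply; apply: sumr_subset_le. Qed.

Lemma cost_setU_le (c : L -> R) (X Y : {set L}) :
  (forall i, 0 <= c i) -> cost c (X :|: Y) <= cost c X + cost c Y.
Proof. by move=> c_ge0; apply: sumr_setU_le. Qed.

End Feasibility.

Theorem lemma1 (R : realFieldType) (L I : finType) (fsc fkp : R)
  (Asc : (L -> R) -> (L -> {set I}) -> {set L})
  (Akp : (L -> R) -> (L -> R) -> R -> {set L})
  (c d : L -> R) (D : R) (S : L -> {set I}) :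
  sc_approx fsc Asc -> kp_approx fkp Akp ->
  (forall i, 0 <= c i) -> (forall i, 0 <= d i) -> 0 <= D ->
  (exists X, dsc_feasible d D S X) ->
  dsc_feasible d D S (A_dsc Asc Akp c d D S) /\
  forall X, dsc_feasible d D S X ->
    cost c (A_dsc Asc Akp c d D S) <= (fsc + fkp) * cost c X.
Proof.
move=> Hsc Hkp c_ge0 d_ge0 D_ge0 [X0 [scX0 kpX0]].
have [scA costSc] := Hsc c S c_ge0 (ex_intro _ X0 scX0).
have [kpA costKp] := Hkp c d D c_ge0 d_ge0 D_ge0 (ex_intro _ X0 kpX0).
split.
  split; first exact: sc_feasibleS (subsetUl _ _) scA.
  exact: kp_feasibleS d_ge0 (subsetUr _ _) kpA.
move=> X [scX kpX]; apply: le_trans (cost_setU_le _ _ c_ge0) _.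
by rewrite mulrDl lerD ?costSc ?costKp.
Qed.
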